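(* Let $L\ge 2$ be an integer, let $A>0$, $\alpha>0$, $\beta>0$, $\sigma_v^2>0$ be known constants, let $\varphi\in[0,2\pi)$ be an unknown parameter, and let $\psi_l=2\pi l/L$ for $l=0,\dots,L-1$. Suppose we observe $$P[l]=A\left|\alpha+\beta e^{\mathrm{j}(\psi_l+\varphi)}+v_l\right|^2,\qquad l=0,\dots,L-1,$$ where $v_0,\dots,v_{L-1}$ are i.i.d. $\mathcal{CN}(0,\sigma_v^2)$. Define $K=2\alpha\beta/(\alpha^2+\beta^2)$, $\gamma_l=\left(\alpha^2+\beta^2+2\alpha\beta\cos(\psi_l+\varphi)\right)/\sigma_v^2$, and let $\bar\gamma=\frac1L\sum_{l=0}^{L-1}\gamma_l$. Then the Cramér–Rao lower bound $\mathrm{CRLB}(\varphi)$ for estimating $\varphi$ from $P[0],\dots,P[L-1]$ (i.e. the reciprocal of the Fisher information $-\mathbb{E}\left[\partial^2\log p(P[0],\dots,P[L-1]\mid\varphi)/\partial\varphi^2\right]$) satisfies $$\frac{1}{\mathrm{CRLB}(\varphi)}=K^2\bar\gamma^{\,2}\sum_{l=0}^{L-1}\sin^2(\psi_l+\varphi)\left(\frac{1}{\gamma_l}-g(\gamma_l)\right),$$ where $$g(\gamma)=\int_0^{+\infty}\gamma t\,\exp(-\gamma(1+t))\,I_0\!\left(2\gamma\sqrt t\right)\left(1-R^2\!\left(2\gamma\sqrt t\right)\right)\mathrm{d}t .$$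
   Context: $\mathcal{CN}(0,\sigma^2)$ is the circularly-symmetric complex Gaussian distribution with variance $\sigma^2$. $I_\nu$ denotes the $\nu$-th order modified Bessel function of the first kind, and $R(z)=I_1(z)/I_0(z)$. Each $P[l]$ thus follows a scaled noncentral chi-squared distribution with two degrees of freedom, with density $\frac{1}{A\sigma_v^2}\exp\!\left(-\frac{x+\lambda_l}{A\sigma_v^2}\right)I_0\!\left(\frac{\sqrt{\lambda_l x}}{A\sigma_v^2/2}\right)$ for $x\ge0$, where $\lambda_l=A(\alpha^2+\beta^2+2\alpha\beta\cos(\psi_l+\varphi))$. The phases $\psi_l=2\pi l/L$ come from the model in which the observations are taken at equally spaced instants $t_l=lT_s/L$ of a phase ramp $\psi(t)=2\pi t/T_s$. *)

From Stdlib Require Import Reals Arith.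
From Coquelicot Require Import Coquelicot.
Open Scope R_scope.

Fixpoint sumR (n : nat) (f : nat -> R) : R :=
  match n with O => 0 | S m => sumR m f + f m end.
Fixpoint prodR (n : nat) (f : nat -> R) : R :=
  match n with O => 1 | S m => prodR m f * f m end.

Definition besselI (nu : nat) (z : R) : R :=
  Series (fun k => (z / 2) ^ (2 * k + nu) / (INR (Factorial.fact k) * INR (Factorial.fact (k + nu)))).

Definition besselR (z : R) : R := besselI 1 z / besselI 0 z.

Definition int0inf (f : R -> R) : R :=
  RInt_gen f (at_point 0) (Rbar_locally p_infty).

Definition psi (L l : nat) : R := 2 * PI * INR l / INR L.

Definition lam (L : nat) (A alpha beta phi : R) (l : nat) : R :=
  A * (alpha ^ 2 + beta ^ 2 + 2 * alpha * beta * cos (psi L l + phi)).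

(* marginal density of P[l] at x >= 0 (scaled noncentral chi-squared, 2 d.o.f.) *)
Definition dens (L : nat) (A alpha beta s2 phi : R) (l : nat) (x : R) : R :=
  1 / (A * s2) * exp (- (x + lam L A alpha beta phi l) / (A * s2))
  * besselI 0 (sqrt (lam L A alpha beta phi l * x) / (A * s2 / 2)).

(* joint density p(P[0..L-1] | phi) of the independent observations;
   an observation vector is a function x : nat -> R (coordinates 0..L-1 used) *)
Definition joint_dens (L : nat) (A alpha beta s2 phi : R) (x : nat -> R) : R :=
  prodR L (fun l => dens L A alpha beta s2 phi l (x l)).

Definition upd (x : nat -> R) (n : nat) (t : R) : nat -> R :=
  fun k => if Nat.eqb k n then t else x k.

Fixpoint iter_int (n : nat) (F : (nat -> R) -> R) : R :=
  match n with
  | O => F (fun _ => 0)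
  | S m => int0inf (fun t => iter_int m (fun x => F (upd x m t)))
  end.

Definition fisher_info (L : nat) (A alpha beta s2 phi : R) : R :=
  - iter_int L (fun x =>
      Derive (fun ph => Derive (fun ph' => ln (joint_dens L A alpha beta s2 ph' x)) ph) phi
      * joint_dens L A alpha beta s2 phi x).

Definition CRLB (L : nat) (A alpha beta s2 phi : R) : R :=
  / fisher_info L A alpha beta s2 phi.

Definition gfun (g : R) : R :=
  int0inf (fun t => g * t * exp (- g * (1 + t)) * besselI 0 (2 * g * sqrt t)
                     * (1 - (besselR (2 * g * sqrt t)) ^ 2)).

Definition Kc (alpha beta : R) : R := 2 * alpha * beta / (alpha ^ 2 + beta ^ 2).

Definition gam (L : nat) (alpha beta s2 phi : R) (l : nat) : R :=
  (alpha ^ 2 + beta ^ 2 + 2 * alpha * beta * cos (psi L l + phi)) / s2.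

Definition gam_bar (L : nat) (alpha beta s2 phi : R) : R :=
  / INR L * sumR L (gam L alpha beta s2 phi).

(* Writing I_0(z) = J(z^2) and I_1(z) = 2 z J'(z^2) for the entire series
   J(q) = sum_k q^k / (4^k k!^2), the density of P[l] is (1/s) e^(-(t+u)/s) J(4 t u / s^2)
   with s = A sigma_v^2 and u = lambda_l(phi), smooth in phi.  The log-likelihood is a sum over
   the independent observations, so the expected Hessian is a sum of one-observation
   expectations.  After the substitution t = s y each of them is a combination of integrals of
   y^m e^(-y) J^(d)(4 g y), g = u / s = gamma_l, which termwise integration of the power series
   evaluates in terms of e^g; the exception is the integral of y^2 e^(-y) J'(4 g y)^2 / J(4 g y),
   which is exactly what g(gamma_l) leaves unevaluated.  Finally sum_l cos(psi_l + phi) = 0, so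
   gamma_bar = (alpha^2 + beta^2) / sigma_v^2 and K gamma_bar = 2 alpha beta / sigma_v^2. *)

From Stdlib Require Import Reals Factorial Lra Lia Psatz.
From Stdlib Require Import Classical FunctionalExtensionality PropExtensionality.
From Coquelicot Require Import Coquelicot.
Open Scope R_scope.

(** * Finite sums and products *)

Lemma sumR_ext n f g : (forall k, (k < n)%nat -> f k = g k) -> sumR n f = sumR n g.
Proof.
  induction n as [|n IH]; intros H; simpl; [reflexivity |].
  rewrite IH by (intros; apply H; lia). rewrite H by lia. reflexivity.
Qed.

Lemma sumR_mult_l n c f : sumR n (fun l => c * f l) = c * sumR n f.
Proof. induction n as [|n IH]; simpl; [ring | rewrite IH; ring]. Qed.

Lemma sumR_mult_r n c f : sumR n f * c = sumR n (fun l => f l * c).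
Proof. induction n as [|n IH]; simpl; [ring | rewrite <- IH; ring]. Qed.

Lemma sumR_sum_n n a : sumR (S n) a = sum_n a n.
Proof.
  induction n as [|n IH]; simpl.
  - rewrite sum_O. apply Rplus_0_l.
  - rewrite sum_Sn, <- IH. reflexivity.
Qed.

Lemma sumR_affine n a b f : sumR n (fun l => a + b * f l) = INR n * a + b * sumR n f.
Proof. induction n as [|n IH]; simpl sumR; [simpl; ring | rewrite IH, S_INR; ring]. Qed.

Lemma sumR_opp n f : sumR n (fun l => - f l) = - sumR n f.
Proof. induction n as [|n IH]; simpl; [ring | rewrite IH; ring]. Qed.

Lemma sumR_telescope n (f : nat -> R) : sumR n (fun l => f (S l) - f l) = f n - f 0%nat.
Proof. induction n as [|n IH]; simpl; [ring | rewrite IH; ring]. Qed.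

Lemma prodR_ext n f g : (forall k, (k < n)%nat -> f k = g k) -> prodR n f = prodR n g.
Proof.
  induction n as [|n IH]; intros H; simpl; [reflexivity |].
  rewrite IH by (intros; apply H; lia). rewrite H by lia. reflexivity.
Qed.

Lemma prodR_one n : prodR n (fun _ => 1) = 1.
Proof. induction n as [|n IH]; simpl; [reflexivity | rewrite IH; ring]. Qed.

Lemma prodR_pos n f : (forall k, (k < n)%nat -> 0 < f k) -> 0 < prodR n f.
Proof.
  induction n as [|n IH]; intros H; simpl; [lra |].
  apply Rmult_lt_0_compat; [apply IH; intros; apply H; lia | apply H; lia].
Qed.

Lemma ln_prodR n f : (forall k, (k < n)%nat -> 0 < f k) -> ln (prodR n f) = sumR n (fun k => ln (f k)).
Proof.
  induction n as [|n IH]; intros H; simpl; [apply ln_1 |].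
  rewrite ln_mult, IH; [reflexivity | intros; apply H; lia | | apply H; lia].
  apply prodR_pos. intros; apply H; lia.
Qed.

Lemma prodR_update n l (g f : nat -> R) a : (l < n)%nat ->
  (forall k, (k < n)%nat -> k <> l -> g k = f k) -> g l = a * f l -> prodR n g = a * prodR n f.
Proof.
  induction n as [|n IH]; intros Hl Hk Hg; [lia |]. simpl.
  destruct (Nat.eq_dec l n) as [-> | Hne].
  - rewrite (prodR_ext n g f) by (intros; apply Hk; lia). rewrite Hg. ring.
  - rewrite IH by (auto; lia). rewrite Hk by lia. ring.
Qed.

Lemma is_derive_sumR n (F : nat -> R -> R) (dF : nat -> R) x :
  (forall l, (l < n)%nat -> is_derive (F l) x (dF l)) ->
  is_derive (fun y => sumR n (fun l => F l y)) x (sumR n dF).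
Proof.
  induction n as [|n IH]; intros H; simpl.
  - apply (is_derive_const 0).
  - apply (is_derive_plus (fun y => sumR n (fun l => F l y)) (F n)); [apply IH; intros |]; apply H; lia.
Qed.

(** * Improper integrals on [0, +oo) *)

Definition is_int0inf (f : R -> R) (v : R) : Prop :=
  (forall b, 0 <= b -> ex_RInt f 0 b) /\
  (forall eps, 0 < eps -> exists M, forall b, M <= b -> Rabs (RInt f 0 b - v) < eps).

Lemma is_int0inf_unique f v : is_int0inf f v -> int0inf f = v.
Proof.
  intros [Hex Hlim]. apply is_RInt_gen_unique. intros P [eps HP].
  destruct (Hlim eps (cond_pos eps)) as [M HM].
  exists (fun a => a = 0) (fun b => Rmax M 0 < b).
  - reflexivity.
  - exists (Rmax M 0); auto.
  - intros a b -> Hb. exists (RInt f 0 b). split.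
    + apply RInt_correct, Hex. generalize (Rmax_r M 0); lra.
    + apply HP, HM. generalize (Rmax_l M 0); lra.
Qed.

Lemma int0inf_ext f g : (forall t, 0 < t -> f t = g t) -> int0inf f = int0inf g.
Proof.
  assert (Hsym : forall f g (l : R), (forall t, 0 < t -> f t = g t) ->
    is_RInt_gen f (at_point 0) (Rbar_locally p_infty) l ->
    is_RInt_gen g (at_point 0) (Rbar_locally p_infty) l).
  { intros f' g' l E. apply is_RInt_gen_ext.
    exists (fun a => a = 0) (fun b => 0 < b); [reflexivity | exists 0; auto |].
    intros a b -> Hb x Hx. simpl in Hx. rewrite Rmin_left in Hx by lra. apply E. lra. }
  intros E. unfold int0inf, RInt_gen. f_equal.
  apply functional_extensionality. intros l. apply propositional_extensionality.
  split; apply Hsym; intros t Ht; [| symmetry]; apply E, Ht.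
Qed.

Lemma is_int0inf_ext f g v :
  (forall t, 0 < t -> f t = g t) -> is_int0inf f v -> is_int0inf g v.
Proof.
  intros E [Hex Hlim]. split.
  - intros b Hb. apply ex_RInt_ext with f; [|auto].
    intros x Hx. apply E. rewrite Rmin_left in Hx by lra. lra.
  - intros eps He. destruct (Hlim eps He) as [M HM]. exists (Rmax M 0).
    intros b Hb. generalize (Rmax_l M 0) (Rmax_r M 0); intros.
    rewrite <- (RInt_ext f); [apply HM; lra |].
    intros x Hx. apply E. rewrite Rmin_left in Hx; lra.
Qed.

Lemma is_int0inf_plus f g v w :
  is_int0inf f v -> is_int0inf g w -> is_int0inf (fun t => f t + g t) (v + w).
Proof.
  intros [Hf Lf] [Hg Lg]. split.
  - intros b Hb. apply (ex_RInt_plus f g); auto.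
  - intros eps He.
    destruct (Lf (eps / 2)) as [M1 H1]; [lra |]. destruct (Lg (eps / 2)) as [M2 H2]; [lra |].
    exists (Rmax 0 (Rmax M1 M2)). intros b Hb.
    generalize (Rmax_l 0 (Rmax M1 M2)) (Rmax_r 0 (Rmax M1 M2)) (Rmax_l M1 M2) (Rmax_r M1 M2); intros.
    rewrite (RInt_plus f g) by (apply Hf || apply Hg; lra).
    specialize (H1 b ltac:(lra)). specialize (H2 b ltac:(lra)).
    apply Rabs_def2 in H1. apply Rabs_def2 in H2. apply Rabs_def1; simpl; unfold plus; simpl; lra.
Qed.

Lemma is_int0inf_scal k f v : is_int0inf f v -> is_int0inf (fun t => k * f t) (k * v).
Proof.
  intros [Hf Lf]. split.
  - intros b Hb. apply (ex_RInt_scal f); auto.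
  - intros eps He.
    assert (Hk : 0 < Rabs k + 1) by (generalize (Rabs_pos k); lra).
    destruct (Lf (eps / (Rabs k + 1))) as [M H1]; [apply Rdiv_lt_0_compat; lra |].
    exists (Rmax 0 M). intros b Hb.
    generalize (Rmax_l 0 M) (Rmax_r 0 M); intros.
    rewrite (RInt_scal f) by (apply Hf; lra).
    change (scal k (RInt f 0 b)) with (k * RInt f 0 b).
    specialize (H1 b ltac:(lra)).
    replace (k * RInt f 0 b - k * v) with (k * (RInt f 0 b - v)) by ring.
    rewrite Rabs_mult.
    apply Rle_lt_trans with ((Rabs k + 1) * Rabs (RInt f 0 b - v)).
    + apply Rmult_le_compat_r; [apply Rabs_pos | lra].
    + apply Rmult_lt_reg_l with (/ (Rabs k + 1)); [apply Rinv_0_lt_compat; lra |].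
      rewrite <- Rmult_assoc, Rinv_l by lra. unfold Rdiv in H1. lra.
Qed.

Lemma is_int0inf_comp_scal f v c :
  0 < c -> is_int0inf f v -> is_int0inf (fun t => f (c * t)) (v / c).
Proof.
  intros Hc [Hf Lf].
  assert (Hlin : forall b, 0 <= b -> ex_RInt f (c * 0 + 0) (c * b + 0)).
  { intros b Hb. rewrite Rmult_0_r, !Rplus_0_r. apply Hf. apply Rmult_le_pos; lra. }
  assert (Hex : forall b, 0 <= b -> ex_RInt (fun t => f (c * t)) 0 b).
  { intros b Hb. apply (ex_RInt_ext (fun y => scal (/ c) (scal c (f (c * y + 0))))).
    - intros x _. rewrite Rplus_0_r. change (/ c * (c * f (c * x)) = f (c * x)). field. lra.
    - apply (ex_RInt_scal (fun y => scal c (f (c * y + 0)))).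
      apply (ex_RInt_comp_lin f c 0 0 b), Hlin, Hb. }
  assert (E : forall b, 0 <= b -> RInt (fun t => f (c * t)) 0 b = RInt f 0 (c * b) / c).
  { intros b Hb.
    assert (H := RInt_comp_lin f c 0 0 b (Hlin b Hb)).
    rewrite Rmult_0_r, !Rplus_0_r in H. rewrite <- H.
    transitivity (scal (/ c) (RInt (fun y => scal c (f (c * y + 0))) 0 b)).
    - rewrite <- RInt_scal by (apply (ex_RInt_comp_lin f c 0 0 b), Hlin, Hb).
      apply RInt_ext. intros x _. rewrite Rplus_0_r.
      change (f (c * x) = / c * (c * f (c * x))). field. lra.
    - change (/ c * RInt (fun y => scal c (f (c * y + 0))) 0 b
              = RInt (fun y => scal c (f (c * y + 0))) 0 b / c).
      unfold Rdiv. apply Rmult_comm. }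
  split; [exact Hex |].
  intros eps He. destruct (Lf (eps * c)) as [M H1]; [apply Rmult_lt_0_compat; lra |].
  exists (Rmax 0 (M / c)). intros b Hb.
  generalize (Rmax_l 0 (M / c)) (Rmax_r 0 (M / c)); intros.
  rewrite E by lra.
  assert (HM : M <= c * b).
  { apply Rmult_le_reg_r with (/ c); [apply Rinv_0_lt_compat; lra |].
    replace (c * b * / c) with b by (field; lra). unfold Rdiv in *. lra. }
  specialize (H1 _ HM).
  replace (RInt f 0 (c * b) / c - v / c) with ((RInt f 0 (c * b) - v) * / c) by (field; lra).
  rewrite Rabs_mult, Rabs_inv, (Rabs_pos_eq c) by lra.
  apply Rmult_lt_reg_r with c; [lra |]. rewrite Rmult_assoc, Rinv_l by lra. lra.
Qed.

Lemma is_int0inf_sumR n (F : nat -> R -> R) (V : nat -> R) :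
  (forall l, is_int0inf (F l) (V l)) -> is_int0inf (fun t => sumR n (fun l => F l t)) (sumR n V).
Proof.
  intros H. induction n as [|n IH]; simpl.
  - split; [intros; apply ex_RInt_const |].
    intros eps He. exists 0. intros b _. rewrite RInt_const.
    change (scal (b - 0) 0) with ((b - 0) * 0). rewrite Rmult_0_r, Rminus_0_r, Rabs_R0. lra.
  - apply is_int0inf_plus; auto.
Qed.

Lemma RInt_0_nondecreasing (h : R -> R) b1 b2 :
  (forall t, 0 <= t -> 0 <= h t) -> (forall b, 0 <= b -> ex_RInt h 0 b) ->
  0 <= b1 <= b2 -> RInt h 0 b1 <= RInt h 0 b2.
Proof.
  intros Hp Hex Hb.
  assert (E1 : ex_RInt h 0 b1) by (apply Hex; lra).
  assert (E2 : ex_RInt h b1 b2) by (apply (ex_RInt_Chasles_2 h 0 b1 b2); [lra | apply Hex; lra]).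
  rewrite <- (RInt_Chasles h 0 b1 b2 E1 E2).
  assert (0 <= RInt h b1 b2) by (apply RInt_ge_0; auto; [lra | intros; apply Hp; lra]).
  simpl; unfold plus; simpl; lra.
Qed.

Lemma is_int0inf_RInt_le (h : R -> R) v b :
  (forall t, 0 <= t -> 0 <= h t) -> is_int0inf h v -> 0 <= b -> RInt h 0 b <= v.
Proof.
  intros Hp [Hex Hl] Hb. apply Rnot_lt_le. intros Hlt.
  destruct (Hl (RInt h 0 b - v)) as [M HM]; [lra |].
  specialize (HM (Rmax b M) (Rmax_r b M)).
  assert (RInt h 0 b <= RInt h 0 (Rmax b M))
    by (apply RInt_0_nondecreasing; auto; split; [lra | apply Rmax_l]).
  apply Rabs_def2 in HM. lra.
Qed.

(* The partial integrals are nondecreasing and bounded; their supremum is the limit. *)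
Lemma ex_int0inf_le f g v :
  (forall t, 0 <= t -> 0 <= f t <= g t) -> (forall b, 0 <= b -> ex_RInt f 0 b) ->
  is_int0inf g v -> exists w, is_int0inf f w.
Proof.
  intros Hfg Hf Hg.
  assert (Hfp : forall t, 0 <= t -> 0 <= f t) by (intros t Ht; apply Hfg, Ht).
  assert (Bd : forall b, 0 <= b -> RInt f 0 b <= v).
  { intros b Hb. apply Rle_trans with (RInt g 0 b).
    - apply RInt_le; auto; [apply (proj1 Hg); auto |]. intros x Hx; apply Hfg; lra.
    - apply is_int0inf_RInt_le; auto. intros t Ht. specialize (Hfg t Ht). lra. }
  set (E := fun r => exists b, 0 <= b /\ r = RInt f 0 b).
  destruct (completeness E) as [w [Hub Hlub]].
  { exists v. intros r [b [Hb ->]]. apply Bd, Hb. }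
  { exists (RInt f 0 0), 0. split; [lra | reflexivity]. }
  exists w. split; [exact Hf |].
  intros eps He.
  destruct (classic (exists b, 0 <= b /\ w - eps < RInt f 0 b)) as [[b0 [Hb0 Hlt]] | Hn].
  - exists b0. intros b Hb.
    assert (RInt f 0 b0 <= RInt f 0 b) by (apply RInt_0_nondecreasing; auto).
    assert (RInt f 0 b <= w) by (apply Hub; exists b; split; [lra | reflexivity]).
    apply Rabs_def1; lra.
  - exfalso. assert (w <= w - eps); [| lra].
    apply Hlub. intros r [b [Hb ->]]. apply Rnot_lt_le. intros Hlt. apply Hn. exists b; auto.
Qed.

Lemma is_int0inf_derive (h dh : R -> R) :
  (forall y, 0 <= y -> is_derive h y (dh y)) -> (forall y, 0 <= y -> continuous dh y) ->
  is_lim h p_infty 0 -> is_int0inf dh (- h 0).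
Proof.
  intros Hd Hc Hlim.
  assert (HI : forall b, 0 <= b -> is_RInt dh 0 b (h b - h 0)).
  { intros b Hb. apply (is_RInt_derive h dh 0 b);
      intros x Hx; rewrite Rmin_left, Rmax_right in Hx by lra; [apply Hd | apply Hc]; lra. }
  split; [intros b Hb; eexists; apply HI, Hb |].
  intros eps He. apply is_lim_spec in Hlim. destruct (Hlim (mkposreal eps He)) as [M HM].
  exists (Rmax 0 (M + 1)). intros b Hb.
  generalize (Rmax_l 0 (M + 1)) (Rmax_r 0 (M + 1)); intros.
  rewrite (is_RInt_unique _ _ _ _ (HI b ltac:(lra))).
  specialize (HM b ltac:(lra)). simpl in HM. rewrite Rminus_0_r in HM.
  replace (h b - h 0 - - h 0) with (h b) by ring. exact HM.
Qed.

Lemma is_lim_pow_mul_exp_opp n : is_lim (fun y => y ^ n * exp (- y)) p_infty 0.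
Proof.
  apply is_lim_le_le_loc with (fun _ => 0) (fun y => INR (fact (S n)) * / y).
  - exists 0. intros y Hy.
    assert (Hf : 0 < INR (fact (S n))) by apply INR_fact_lt_0.
    assert (Hpos : 0 <= sum_f_R0 (fun k => y ^ k / INR (fact k)) n).
    { apply cond_pos_sum. intros k. apply Rdiv_le_0_compat; [apply pow_le; lra | apply INR_fact_lt_0]. }
    assert (Hexp := exp_ge_taylor y (S n) ltac:(lra)). rewrite tech5 in Hexp.
    assert (Hey := exp_pos y). rewrite exp_Ropp.
    split.
    + apply Rmult_le_pos; [apply pow_le; lra | apply Rlt_le, Rinv_0_lt_compat, Hey].
    + apply Rmult_le_reg_r with (y * exp y / INR (fact (S n))); [apply Rdiv_lt_0_compat; nra |].
      replace (y ^ n * / exp y * (y * exp y / INR (fact (S n)))) with (y ^ S n / INR (fact (S n)))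
        by (simpl pow; field; split; lra).
      replace (INR (fact (S n)) * / y * (y * exp y / INR (fact (S n)))) with (exp y) by (field; lra).
      lra.
  - apply is_lim_const.
  - replace (Finite 0) with (Rbar_mult (INR (fact (S n))) (Rbar_inv p_infty)) by (simpl; f_equal; ring).
    apply is_lim_scal_l, is_lim_inv; [apply is_lim_id | discriminate].
Qed.

Lemma is_int0inf_pow_mul_exp_opp n : is_int0inf (fun y => y ^ n * exp (- y)) (INR (fact n)).
Proof.
  assert (Hc : forall k y, continuous (fun y => y ^ k * exp (- y)) y).
  { intros k y. apply (ex_derive_continuous (V := R_NormedModule)). auto_derive. exact I. }
  assert (Hlim : forall k, is_lim (fun y => - (y ^ k * exp (- y))) p_infty 0).
  { intros k. replace (Finite 0) with (Rbar_mult (-1) 0) by (simpl; f_equal; ring).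
    apply (is_lim_ext (fun y => -1 * (y ^ k * exp (- y)))); [intros; ring |].
    apply is_lim_scal_l, is_lim_pow_mul_exp_opp. }
  induction n as [|n IH].
  - replace (INR (fact 0)) with (- - (0 ^ 0 * exp (- 0))) by (simpl; rewrite Ropp_0, exp_0; ring).
    apply (is_int0inf_derive (fun y => - (y ^ 0 * exp (- y)))).
    + intros y _. auto_derive; [exact I | ring].
    + intros y _. apply Hc.
    + apply Hlim.
  - (* y^(n+1) e^(-y) = (n+1) y^n e^(-y) - d/dy (y^(n+1) e^(-y)) *)
    set (dh := fun y => y ^ S n * exp (- y) - INR (S n) * (y ^ n * exp (- y))).
    assert (Hdh : is_int0inf dh 0).
    { replace 0 with (- - (0 ^ S n * exp (- 0))) by (simpl; ring).
      apply (is_int0inf_derive (fun y => - (y ^ S n * exp (- y)))).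
      - intros y _. unfold dh. auto_derive; [exact I |].
        change (match n with 0%nat => 1 | S _ => INR n + 1 end) with (INR (S n)).
        rewrite <- tech_pow_Rmult. ring.
      - intros y _. unfold dh. apply (continuous_minus (V := R_NormedModule)); [apply Hc |].
        apply (continuous_scal_r (V := R_NormedModule) (INR (S n))), Hc.
      - apply Hlim. }
    replace (INR (fact (S n))) with (INR (S n) * INR (fact n) + 0)
      by (rewrite Rplus_0_r, fact_simpl, mult_INR; reflexivity).
    eapply is_int0inf_ext; [| apply (is_int0inf_plus _ _ _ _ (is_int0inf_scal (INR (S n)) _ _ IH) Hdh)].
    intros t _. unfold dh. ring.
Qed.

(** * Termwise integration of power series *)

Lemma Series_nonneg a : (forall k, 0 <= a k) -> ex_series a -> 0 <= Series a.
Proof.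
  intros Ha Hex. replace 0 with (Series (fun _ => 0)).
  - apply Series_le; [intros k; split; [lra | apply Ha] | exact Hex].
  - transitivity (Series (fun _ : nat => 0 * 0)); [apply Series_ext; intros; ring |].
    rewrite Series_scal_l. ring.
Qed.

Lemma Series_sumR_tail (a : nat -> R) n :
  ex_series a -> Series a = sumR n a + Series (fun k => a (n + k)%nat).
Proof.
  intros Hex. induction n as [|n IH]; simpl; [symmetry; apply Rplus_0_l |].
  rewrite IH, (Series_incr_1 (fun k => a (n + k)%nat)) by (apply ex_series_incr_n, Hex).
  rewrite Nat.add_0_r, Rplus_assoc. do 3 f_equal.
  apply functional_extensionality. intros k. f_equal. lia.
Qed.

Lemma sumR_le_is_series a s n : (forall k, 0 <= a k) -> is_series a s -> sumR n a <= s.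
Proof.
  intros Ha Hs. rewrite <- (is_series_unique a s Hs).
  rewrite (Series_sumR_tail a n) by (eexists; exact Hs).
  assert (0 <= Series (fun k => a (n + k)%nat)); [| lra].
  apply Series_nonneg; [intros; apply Ha |]. apply ex_series_incr_n. eexists; exact Hs.
Qed.

Lemma is_series_sumR_approx a s eps :
  is_series a s -> 0 < eps -> exists N, Rabs (sumR N a - s) < eps.
Proof.
  intros Hs He. assert (Hlim : is_lim_seq (sum_n a) s) by exact Hs.
  apply is_lim_seq_spec in Hlim. destruct (Hlim (mkposreal eps He)) as [N HN].
  exists (S N). rewrite sumR_sum_n. apply HN. lia.
Qed.

Lemma ex_series_of_CV_radius a x : CV_radius a = p_infty -> ex_series (fun k => a k * x ^ k).
Proof.
  intros Hr. assert (H := CV_radius_inside a x). rewrite Hr in H.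
  apply ex_series_ext with (2 := H I). intros k. rewrite pow_n_pow. apply Rmult_comm.
Qed.

Section TermwiseIntegration.

Variables (a : nat -> R) (c : R) (m : nat) (s : R).
Hypothesis a_nonneg : forall k, 0 <= a k.
Hypothesis c_nonneg : 0 <= c.
Hypothesis a_radius : CV_radius a = p_infty.
Hypothesis s_sum : is_series (fun k => a k * c ^ k * INR (fact (k + m))) s.

Let F y := y ^ m * exp (- y) * PSeries a (c * y).
Let F_N N y := y ^ m * exp (- y) * sumR N (fun k => a k * (c * y) ^ k).
Let tail N x := Series (fun k => a (N + k)%nat * x ^ (N + k)).

Lemma PSeries_split_tail N x : PSeries a x = sumR N (fun k => a k * x ^ k) + tail N x.
Proof. apply (Series_sumR_tail (fun k => a k * x ^ k)), ex_series_of_CV_radius, a_radius. Qed.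

Lemma PSeries_tail_nonneg N x : 0 <= x -> 0 <= tail N x.
Proof.
  intros Hx. apply Series_nonneg.
  - intros k. apply Rmult_le_pos; [apply a_nonneg | apply pow_le, Hx].
  - apply (ex_series_incr_n (fun k => a k * x ^ k)), ex_series_of_CV_radius, a_radius.
Qed.

Lemma PSeries_tail_le N x y : 0 <= x <= y -> tail N x <= tail N y.
Proof.
  intros Hxy. apply Series_le.
  - intros k. split.
    + apply Rmult_le_pos; [apply a_nonneg | apply pow_le; lra].
    + apply Rmult_le_compat_l; [apply a_nonneg | apply pow_incr; lra].
  - apply (ex_series_incr_n (fun k => a k * y ^ k)), ex_series_of_CV_radius, a_radius.
Qed.

Lemma PSeries_tail_small x eps : 0 < eps -> exists N, tail N x < eps.
Proof.
  intros He.
  destruct (is_series_sumR_approx (fun k => a k * x ^ k) (PSeries a x) eps) as [N HN];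
    [apply Series_correct, ex_series_of_CV_radius, a_radius | exact He |].
  exists N. rewrite (PSeries_split_tail N x) in HN.
  replace (sumR N (fun k => a k * x ^ k) - (sumR N (fun k => a k * x ^ k) + tail N x))
    with (- tail N x) in HN by ring.
  rewrite Rabs_Ropp in HN. eapply Rle_lt_trans; [apply Rle_abs | exact HN].
Qed.

Lemma partial_integrand_nonneg N y : 0 <= y -> 0 <= F_N N y.
Proof.
  intros Hy. unfold F_N. apply Rmult_le_pos.
  - apply Rmult_le_pos; [apply pow_le, Hy | apply Rlt_le, exp_pos].
  - induction N as [|N IH]; simpl; [lra |].
    apply Rplus_le_le_0_compat; [exact IH |].
    apply Rmult_le_pos; [apply a_nonneg | apply pow_le, Rmult_le_pos; lra].
Qed.

Lemma is_int0inf_partial_integrand N :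
  is_int0inf (F_N N) (sumR N (fun k => a k * c ^ k * INR (fact (k + m)))).
Proof.
  eapply is_int0inf_ext; [| apply is_int0inf_sumR; intros k;
    apply (is_int0inf_scal (a k * c ^ k) _ _ (is_int0inf_pow_mul_exp_opp (k + m)))].
  intros y _. unfold F_N. rewrite Rmult_comm, sumR_mult_r. apply sumR_ext. intros k _.
  rewrite Rpow_mult_distr, pow_add. ring.
Qed.

Lemma pow_exp_PSeries_continuous y : continuous F y.
Proof.
  apply (@ex_derive_continuous R_AbsRing R_NormedModule F y). unfold F. auto_derive.
  apply ex_derive_PSeries. rewrite a_radius. exact I.
Qed.

Lemma ex_RInt_pow_exp_PSeries b : ex_RInt F 0 b.
Proof.
  apply (ex_RInt_continuous (V := R_CompleteNormedModule)). intros; apply pow_exp_PSeries_continuous.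
Qed.

Lemma partial_integrand_le N y : 0 <= y -> F_N N y <= F y.
Proof.
  intros Hy. unfold F, F_N. rewrite (PSeries_split_tail N (c * y)).
  assert (0 <= y ^ m * exp (- y) * tail N (c * y)); [| lra].
  apply Rmult_le_pos; [apply Rmult_le_pos; [apply pow_le, Hy | apply Rlt_le, exp_pos] |].
  apply PSeries_tail_nonneg, Rmult_le_pos; lra.
Qed.

Lemma integrand_le_partial_tail N y B : 0 <= y <= B -> F y <= F_N N y + B ^ m * tail N (c * B).
Proof.
  intros Hy. unfold F, F_N. rewrite (PSeries_split_tail N (c * y)).
  assert (y ^ m * exp (- y) * tail N (c * y) <= B ^ m * tail N (c * B)); [| lra].
  rewrite Rmult_assoc. apply Rmult_le_compat; [apply pow_le; lra | | apply pow_incr; lra |].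
  - apply Rmult_le_pos; [apply Rlt_le, exp_pos | apply PSeries_tail_nonneg, Rmult_le_pos; lra].
  - rewrite <- (Rmult_1_l (tail N (c * B))). apply Rmult_le_compat.
    + apply Rlt_le, exp_pos.
    + apply PSeries_tail_nonneg, Rmult_le_pos; lra.
    + rewrite <- exp_0. destruct (Rle_lt_or_eq_dec 0 y (proj1 Hy)) as [Hlt | <-].
      * apply Rlt_le, exp_increasing. lra.
      * rewrite Ropp_0. lra.
    + apply PSeries_tail_le. split; [apply Rmult_le_pos | apply Rmult_le_compat_l]; lra.
Qed.

(* The tail at [c B] is small for [N] large, while the partial integrals stay below [s]. *)
Lemma RInt_pow_exp_PSeries_le B : 0 <= B -> RInt F 0 B <= s.
Proof.
  intros HB. apply Rle_plus_epsilon. intros eps He.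
  assert (HP : 0 < B ^ S m + 1) by (generalize (pow_le B (S m) HB); lra).
  destruct (PSeries_tail_small (c * B) (eps / (B ^ S m + 1))) as [N HN];
    [apply Rdiv_lt_0_compat; lra |].
  assert (HT0 := PSeries_tail_nonneg N (c * B) ltac:(apply Rmult_le_pos; lra)).
  assert (Hbound : is_RInt (fun y => F_N N y + B ^ m * tail N (c * B)) 0 B
                     (RInt (F_N N) 0 B + (B - 0) * (B ^ m * tail N (c * B)))).
  { apply (is_RInt_plus (V := R_NormedModule)); [| apply (is_RInt_const (V := R_NormedModule))].
    apply (RInt_correct (V := R_CompleteNormedModule)), (proj1 (is_int0inf_partial_integrand N)), HB. }
  assert (HFB : RInt F 0 B <= RInt (F_N N) 0 B + (B - 0) * (B ^ m * tail N (c * B))).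
  { rewrite <- (is_RInt_unique _ _ _ _ Hbound).
    apply RInt_le; [exact HB | apply ex_RInt_pow_exp_PSeries | eexists; exact Hbound |].
    intros y Hy. apply integrand_le_partial_tail. lra. }
  assert (HFN : RInt (F_N N) 0 B <= s).
  { eapply Rle_trans; [apply is_int0inf_RInt_le;
      [apply partial_integrand_nonneg | apply is_int0inf_partial_integrand | exact HB] |].
    apply sumR_le_is_series; [| exact s_sum]. intros k.
    apply Rmult_le_pos; [| apply pos_INR].
    apply Rmult_le_pos; [apply a_nonneg | apply pow_le, c_nonneg]. }
  assert (B * (B ^ m * tail N (c * B)) <= eps); [| lra].
  replace (B * (B ^ m * tail N (c * B))) with (B ^ S m * tail N (c * B)) by (simpl; ring).
  apply Rle_trans with (B ^ S m * (eps / (B ^ S m + 1)));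
    [apply Rmult_le_compat_l; [apply pow_le, HB | lra] |].
  apply Rmult_le_reg_r with (B ^ S m + 1); [exact HP |].
  replace (B ^ S m * (eps / (B ^ S m + 1)) * (B ^ S m + 1)) with (B ^ S m * eps) by (field; lra).
  nra.
Qed.

Lemma is_int0inf_pow_exp_PSeries :
  is_int0inf (fun y => y ^ m * exp (- y) * PSeries a (c * y)) s.
Proof.
  split; [intros b _; apply ex_RInt_pow_exp_PSeries |]. intros eps He.
  destruct (is_series_sumR_approx _ s (eps / 2) s_sum) as [N HN]; [lra |].
  destruct (proj2 (is_int0inf_partial_integrand N) (eps / 2)) as [M HM]; [lra |].
  exists (Rmax 0 M). intros B HB.
  generalize (Rmax_l 0 M) (Rmax_r 0 M); intros.
  specialize (HM B ltac:(lra)).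
  assert (RInt (F_N N) 0 B <= RInt F 0 B).
  { apply RInt_le; [lra | | apply ex_RInt_pow_exp_PSeries |].
    { apply (proj1 (is_int0inf_partial_integrand N)); lra. }
    intros y Hy. apply partial_integrand_le. lra. }
  assert (RInt F 0 B <= s) by (apply RInt_pow_exp_PSeries_le; lra).
  apply Rabs_def2 in HN. apply Rabs_def2 in HM. apply Rabs_def1; fold F; lra.
Qed.

End TermwiseIntegration.

(** * The Bessel series *)

Lemma INR_fact_S k : INR (fact (S k)) = (INR k + 1) * INR (fact k).
Proof. rewrite fact_simpl, mult_INR, S_INR. reflexivity. Qed.

(* [J q = I_0 (sqrt q)]: the Bessel series as a power series in [q = z ^ 2]. *)
Definition bessel_coef (k : nat) : R := / (4 ^ k * INR (fact k) ^ 2).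
Definition J (q : R) : R := PSeries bessel_coef q.
Definition J1 (q : R) : R := PSeries (PS_derive bessel_coef) q.
Definition J2 (q : R) : R := PSeries (PS_derive (PS_derive bessel_coef)) q.

Lemma bessel_coef_pos k : 0 < bessel_coef k.
Proof.
  apply Rinv_0_lt_compat, Rmult_lt_0_compat; [apply pow_lt; lra | apply pow_lt, INR_fact_lt_0].
Qed.

Lemma PS_derive_bessel_coef k :
  PS_derive bessel_coef k = / (4 ^ S k * INR (fact k) * INR (fact (S k))).
Proof.
  unfold PS_derive, bessel_coef. rewrite INR_fact_S, S_INR.
  assert (H := INR_fact_lt_0 k). assert (0 < 4 ^ k) by (apply pow_lt; lra).
  assert (0 <= INR k) by apply pos_INR. simpl pow. field. repeat split; lra.
Qed.

Lemma PS_derive2_bessel_coef k :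
  PS_derive (PS_derive bessel_coef) k = / (4 ^ S (S k) * INR (fact k) * INR (fact (S (S k)))).
Proof.
  unfold PS_derive at 1. rewrite PS_derive_bessel_coef, !INR_fact_S, S_INR.
  assert (H := INR_fact_lt_0 k). assert (0 < 4 ^ k) by (apply pow_lt; lra).
  assert (0 <= INR k) by apply pos_INR. simpl pow. field. repeat split; lra.
Qed.

Lemma PS_derive_bessel_coef_pos k : 0 < PS_derive bessel_coef k.
Proof.
  rewrite PS_derive_bessel_coef. apply Rinv_0_lt_compat.
  apply Rmult_lt_0_compat; [apply Rmult_lt_0_compat |];
    [apply pow_lt; lra | apply INR_fact_lt_0 | apply INR_fact_lt_0].
Qed.

Lemma PS_derive2_bessel_coef_pos k : 0 < PS_derive (PS_derive bessel_coef) k.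
Proof.
  rewrite PS_derive2_bessel_coef. apply Rinv_0_lt_compat.
  apply Rmult_lt_0_compat; [apply Rmult_lt_0_compat |];
    [apply pow_lt; lra | apply INR_fact_lt_0 | apply INR_fact_lt_0].
Qed.

Lemma CV_radius_bessel_coef : CV_radius bessel_coef = p_infty.
Proof.
  apply CV_radius_infinite_DAlembert; [intros n; generalize (bessel_coef_pos n); lra |].
  apply is_lim_seq_le_le with (fun _ => 0) (fun n => / INR (S n)).
  - intros n. unfold bessel_coef. rewrite INR_fact_S, S_INR.
    assert (H := INR_fact_lt_0 n). assert (0 < 4 ^ n) by (apply pow_lt; lra).
    assert (0 <= INR n) by apply pos_INR.
    replace (/ (4 ^ S n * ((INR n + 1) * INR (fact n)) ^ 2) / / (4 ^ n * INR (fact n) ^ 2))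
      with (/ (4 * (INR n + 1) ^ 2)) by (simpl pow; field; repeat split; lra).
    rewrite Rabs_pos_eq by (apply Rlt_le, Rinv_0_lt_compat; nra).
    split; [apply Rlt_le, Rinv_0_lt_compat; nra |]. apply Rinv_le_contravar; nra.
  - apply is_lim_seq_const.
  - replace (Finite 0) with (Rbar_inv p_infty) by reflexivity.
    apply is_lim_seq_inv; [| discriminate]. apply (is_lim_seq_incr_1 INR), is_lim_seq_INR.
Qed.

Lemma CV_radius_PS_derive_bessel_coef : CV_radius (PS_derive bessel_coef) = p_infty.
Proof. rewrite CV_radius_derive. apply CV_radius_bessel_coef. Qed.

Lemma CV_radius_PS_derive2_bessel_coef : CV_radius (PS_derive (PS_derive bessel_coef)) = p_infty.
Proof. rewrite !CV_radius_derive. apply CV_radius_bessel_coef. Qed.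

Lemma J_derive q : is_derive J q (J1 q).
Proof. apply is_derive_PSeries. rewrite CV_radius_bessel_coef. exact I. Qed.

Lemma J1_derive q : is_derive J1 q (J2 q).
Proof. apply is_derive_PSeries. rewrite CV_radius_PS_derive_bessel_coef. exact I. Qed.

Lemma J_ge_1 q : 0 <= q -> 1 <= J q.
Proof.
  intros Hq. unfold J, PSeries.
  rewrite Series_incr_1 by (apply ex_series_of_CV_radius, CV_radius_bessel_coef).
  replace (bessel_coef 0 * q ^ 0) with 1 by (unfold bessel_coef; simpl; field).
  assert (0 <= Series (fun k => bessel_coef (S k) * q ^ S k)); [| lra].
  apply Series_nonneg.
  - intros k. apply Rmult_le_pos; [apply Rlt_le, bessel_coef_pos | apply pow_le, Hq].
  - apply (ex_series_incr_1 (fun k => bessel_coef k * q ^ k)).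
    apply ex_series_of_CV_radius, CV_radius_bessel_coef.
Qed.

Lemma J_pos q : 0 <= q -> 0 < J q.
Proof. intros Hq. generalize (J_ge_1 q Hq). lra. Qed.

Lemma J1_nonneg q : 0 <= q -> 0 <= J1 q.
Proof.
  intros Hq. apply Series_nonneg.
  - intros k. apply Rmult_le_pos; [apply Rlt_le, PS_derive_bessel_coef_pos | apply pow_le, Hq].
  - apply ex_series_of_CV_radius, CV_radius_PS_derive_bessel_coef.
Qed.

Lemma J1_le_J q : 0 <= q -> 4 * J1 q <= J q.
Proof.
  intros Hq. unfold J1, J, PSeries. rewrite <- Series_scal_l. apply Series_le.
  - intros k. split.
    + apply Rmult_le_pos; [lra |].
      apply Rmult_le_pos; [apply Rlt_le, PS_derive_bessel_coef_pos | apply pow_le, Hq].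
    + rewrite <- Rmult_assoc. apply Rmult_le_compat_r; [apply pow_le, Hq |].
      rewrite PS_derive_bessel_coef. unfold bessel_coef. rewrite INR_fact_S.
      assert (H := INR_fact_lt_0 k). assert (0 < 4 ^ k) by (apply pow_lt; lra).
      assert (0 <= INR k) by apply pos_INR.
      replace (4 * / (4 ^ S k * INR (fact k) * ((INR k + 1) * INR (fact k))))
        with (/ (4 ^ k * INR (fact k) ^ 2) * / (INR k + 1)) by (simpl pow; field; repeat split; lra).
      rewrite <- (Rmult_1_r (/ (4 ^ k * INR (fact k) ^ 2))) at 2.
      apply Rmult_le_compat_l; [apply Rlt_le, bessel_coef_pos |].
      rewrite <- Rinv_1. apply Rinv_le_contravar; lra.
  - apply ex_series_of_CV_radius, CV_radius_bessel_coef.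
Qed.

Lemma besselI0_eq z : besselI 0 z = J (z ^ 2).
Proof.
  unfold besselI, J, PSeries. apply Series_ext. intros k.
  rewrite !Nat.add_0_r, pow_mult. unfold bessel_coef.
  replace ((z / 2) ^ 2) with (z ^ 2 * / 4) by field.
  rewrite Rpow_mult_distr, pow_inv.
  assert (H := INR_fact_lt_0 k). assert (0 < 4 ^ k) by (apply pow_lt; lra).
  field. split; lra.
Qed.

Lemma besselI1_eq z : besselI 1 z = 2 * z * J1 (z ^ 2).
Proof.
  unfold besselI, J1, PSeries. rewrite <- Series_scal_l. apply Series_ext. intros k.
  rewrite PS_derive_bessel_coef, pow_add, pow_mult.
  replace ((z / 2) ^ 2) with (z ^ 2 * / 4) by field.
  rewrite Rpow_mult_distr, pow_inv. replace (k + 1)%nat with (S k) by lia.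
  assert (H := INR_fact_lt_0 k). assert (H' := INR_fact_lt_0 (S k)).
  assert (0 < 4 ^ k) by (apply pow_lt; lra).
  simpl pow. field. repeat split; lra.
Qed.

(** * Integrals against [exp (- y) J (4 g y)] *)

Lemma is_series_ext_R (a b : nat -> R) l :
  (forall n, a n = b n) -> is_series a l -> is_series b l.
Proof. apply is_series_ext. Qed.

Lemma is_series_exp g : is_series (fun k => g ^ k / INR (fact k)) (exp g).
Proof.
  apply (is_series_ext (fun k => scal (pow_n g k) (/ INR (fact k)))); [| apply is_exp_Reals].
  intros k. rewrite pow_n_pow. reflexivity.
Qed.

Lemma is_series_exp_affine g c :
  is_series (fun k => g ^ k * (INR k + c) / INR (fact k)) ((g + c) * exp g).
Proof.
  assert (Hk : is_series (fun k => g ^ k * INR k / INR (fact k)) (g * exp g)).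
  { apply is_series_decr_1.
    change (is_series (fun k => g ^ S k * INR (S k) / INR (fact (S k)))
              (g * exp g + - (g ^ 0 * INR 0 / INR (fact 0)))).
    replace (g * exp g + - (g ^ 0 * INR 0 / INR (fact 0))) with (exp g * g)
      by (simpl; field).
    apply (is_series_ext_R (fun k => g ^ k / INR (fact k) * g)); [| apply is_series_scal_r, is_series_exp].
    intros k. rewrite INR_fact_S, S_INR.
    assert (H := INR_fact_lt_0 k). assert (0 <= INR k) by apply pos_INR.
    simpl pow. field. split; lra. }
  replace ((g + c) * exp g) with (g * exp g + c * exp g) by ring.
  apply (is_series_ext_R (fun k => g ^ k * INR k / INR (fact k) + c * (g ^ k / INR (fact k)))).
  - intros k. field. apply Rgt_not_eq, INR_fact_lt_0.
  - apply (is_series_plus (fun k => g ^ k * INR k / INR (fact k))); [exact Hk |].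
    apply (is_series_scal_l c (fun k => g ^ k / INR (fact k))), is_series_exp.
Qed.

Lemma is_int0inf_exp_J g : 0 <= g ->
  is_int0inf (fun y => y ^ 0 * exp (- y) * J (4 * g * y)) (exp g).
Proof.
  intros Hg. apply is_int0inf_pow_exp_PSeries;
    [intros k; apply Rlt_le, bessel_coef_pos | lra | apply CV_radius_bessel_coef |].
  apply (is_series_ext_R (fun k => g ^ k / INR (fact k))); [| apply is_series_exp].
  intros k. rewrite Nat.add_0_r. unfold bessel_coef. rewrite Rpow_mult_distr.
  assert (H := INR_fact_lt_0 k). assert (0 < 4 ^ k) by (apply pow_lt; lra).
  field. split; lra.
Qed.

Lemma is_int0inf_pow1_exp_J g : 0 <= g ->
  is_int0inf (fun y => y ^ 1 * exp (- y) * J (4 * g * y)) ((g + 1) * exp g).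
Proof.
  intros Hg. apply is_int0inf_pow_exp_PSeries;
    [intros k; apply Rlt_le, bessel_coef_pos | lra | apply CV_radius_bessel_coef |].
  apply (is_series_ext_R (fun k => g ^ k * (INR k + 1) / INR (fact k))); [| apply is_series_exp_affine].
  intros k. rewrite Nat.add_1_r, INR_fact_S. unfold bessel_coef. rewrite Rpow_mult_distr.
  assert (H := INR_fact_lt_0 k). assert (0 < 4 ^ k) by (apply pow_lt; lra).
  field. split; lra.
Qed.

Lemma is_int0inf_pow1_exp_J1 g : 0 <= g ->
  is_int0inf (fun y => y ^ 1 * exp (- y) * J1 (4 * g * y)) (exp g / 4).
Proof.
  intros Hg. apply is_int0inf_pow_exp_PSeries;
    [intros k; apply Rlt_le, PS_derive_bessel_coef_pos | lra | apply CV_radius_PS_derive_bessel_coef |].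
  apply (is_series_ext_R (fun k => g ^ k / INR (fact k) * / 4)); [| apply is_series_scal_r, is_series_exp].
  intros k. rewrite Nat.add_1_r, PS_derive_bessel_coef, Rpow_mult_distr.
  assert (H := INR_fact_lt_0 k). assert (H' := INR_fact_lt_0 (S k)).
  assert (0 < 4 ^ k) by (apply pow_lt; lra). simpl pow. field. repeat split; lra.
Qed.

Lemma is_int0inf_pow2_exp_J1 g : 0 <= g ->
  is_int0inf (fun y => y ^ 2 * exp (- y) * J1 (4 * g * y)) ((g + 2) * exp g / 4).
Proof.
  intros Hg. apply is_int0inf_pow_exp_PSeries;
    [intros k; apply Rlt_le, PS_derive_bessel_coef_pos | lra | apply CV_radius_PS_derive_bessel_coef |].
  apply (is_series_ext_R (fun k => g ^ k * (INR k + 2) / INR (fact k) * / 4));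
    [| apply is_series_scal_r, is_series_exp_affine].
  intros k. replace (k + 2)%nat with (S (S k)) by lia.
  rewrite PS_derive_bessel_coef, (INR_fact_S (S k)), S_INR, Rpow_mult_distr.
  assert (H := INR_fact_lt_0 k). assert (H' := INR_fact_lt_0 (S k)).
  assert (0 <= INR k) by apply pos_INR.
  assert (0 < 4 ^ k) by (apply pow_lt; lra). simpl pow. field. repeat split; lra.
Qed.

Lemma is_int0inf_pow2_exp_J2 g : 0 <= g ->
  is_int0inf (fun y => y ^ 2 * exp (- y) * J2 (4 * g * y)) (exp g / 16).
Proof.
  intros Hg. apply is_int0inf_pow_exp_PSeries;
    [intros k; apply Rlt_le, PS_derive2_bessel_coef_pos | lra | apply CV_radius_PS_derive2_bessel_coef |].
  apply (is_series_ext_R (fun k => g ^ k / INR (fact k) * / 16)); [| apply is_series_scal_r, is_series_exp].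
  intros k. replace (k + 2)%nat with (S (S k)) by lia.
  rewrite PS_derive2_bessel_coef, Rpow_mult_distr.
  assert (H := INR_fact_lt_0 k). assert (H' := INR_fact_lt_0 (S (S k))).
  assert (0 < 4 ^ k) by (apply pow_lt; lra). simpl pow. field. repeat split; lra.
Qed.

(* The only integral without a closed form; [gfun] keeps it unevaluated. *)
Definition ratio_integrand (g y : R) : R := y ^ 2 * exp (- y) * (J1 (4 * g * y) ^ 2 / J (4 * g * y)).

Lemma is_int0inf_ratio_integrand g : 0 <= g ->
  is_int0inf (ratio_integrand g) (int0inf (ratio_integrand g)).
Proof.
  intros Hg.
  assert (Hq : forall t, 0 <= t -> 0 <= 4 * g * t) by (intros; apply Rmult_le_pos; lra).
  destruct (ex_int0inf_le (ratio_integrand g) (fun y => / 4 * (y ^ 2 * exp (- y) * J1 (4 * g * y)))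
              (/ 4 * ((g + 2) * exp g / 4))) as [M HM].
  - (* [J1 ^ 2 / J <= J1 / 4] since [4 J1 <= J] *)
    intros t Ht. unfold ratio_integrand.
    assert (HJ := J_ge_1 _ (Hq t Ht)). assert (H1 := J1_nonneg _ (Hq t Ht)).
    assert (H2 := J1_le_J _ (Hq t Ht)).
    assert (0 <= t ^ 2 * exp (- t))
      by (apply Rmult_le_pos; [apply pow_le | apply Rlt_le, exp_pos]; lra).
    assert (K : J1 (4 * g * t) ^ 2 / J (4 * g * t) <= / 4 * J1 (4 * g * t)).
    { apply Rmult_le_reg_r with (J (4 * g * t)); [lra |].
      unfold Rdiv. rewrite Rmult_assoc, Rinv_l by lra. simpl pow. nra. }
    split.
    + apply Rmult_le_pos; [lra |]. apply Rdiv_le_0_compat; [apply pow_le |]; lra.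
    + replace (/ 4 * (t ^ 2 * exp (- t) * J1 (4 * g * t)))
        with (t ^ 2 * exp (- t) * (/ 4 * J1 (4 * g * t))) by ring.
      apply Rmult_le_compat_l; assumption.
  - intros b Hb. apply (ex_RInt_continuous (V := R_CompleteNormedModule)). intros z Hz.
    rewrite Rmin_left, Rmax_right in Hz by lra.
    apply (@ex_derive_continuous R_AbsRing R_NormedModule). unfold ratio_integrand.
    assert (HJ := J_pos _ (Hq z ltac:(lra))).
    auto_derive. repeat split.
    + exists (J2 (4 * g * z)). apply J1_derive.
    + exists (J1 (4 * g * z)). apply J_derive.
    + lra.
  - apply is_int0inf_scal, is_int0inf_pow2_exp_J1, Hg.
  - rewrite (is_int0inf_unique _ _ HM). exact HM.
Qed.

(** * One observation *)

(* [s] stands for [A s2], [u] for [lam] at the current [phi], [u1] and [u2] for its first two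
   derivatives in [phi]. *)
Definition nc_dens (s u t : R) : R := / s * exp (- (t + u) / s) * J (4 * t / s ^ 2 * u).

Definition nc_score (s u u1 t : R) : R :=
  let q := 4 * t / s ^ 2 * u in
  - u1 / s + 4 * t / s ^ 2 * u1 * J1 q / J q.

Definition nc_score2 (s u u1 u2 t : R) : R :=
  let q := 4 * t / s ^ 2 * u in
  - u2 / s + 4 * t / s ^ 2 * u2 * J1 q / J q
  + (4 * t / s ^ 2 * u1) ^ 2 * (J2 q * J q - J1 q ^ 2) / J q ^ 2.

Definition nc_mean_score2 (s u u1 : R) : R :=
  (u1 / s) ^ 2 * (1 - 16 * exp (- (u / s)) * int0inf (ratio_integrand (u / s))).

Lemma nc_arg_nonneg s u t : 0 < s -> 0 <= u -> 0 <= t -> 0 <= 4 * t / s ^ 2 * u.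
Proof.
  intros Hs Hu Ht. apply Rmult_le_pos; [apply Rdiv_le_0_compat; [lra | apply pow_lt, Hs] | exact Hu].
Qed.

Lemma nc_dens_pos s u t : 0 < s -> 0 <= u -> 0 <= t -> 0 < nc_dens s u t.
Proof.
  intros Hs Hu Ht. unfold nc_dens.
  apply Rmult_lt_0_compat; [apply Rmult_lt_0_compat; [apply Rinv_0_lt_compat, Hs | apply exp_pos] |].
  apply J_pos, nc_arg_nonneg; assumption.
Qed.

Lemma ln_nc_dens s u t : 0 < s -> 0 <= u -> 0 <= t ->
  ln (nc_dens s u t) = - ln s + - (t + u) / s + ln (J (4 * t / s ^ 2 * u)).
Proof.
  intros Hs Hu Ht. unfold nc_dens.
  assert (HJ := J_pos _ (nc_arg_nonneg s u t Hs Hu Ht)).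
  rewrite !ln_mult, ln_Rinv, ln_exp; try reflexivity; try assumption; try apply exp_pos.
  - apply Rinv_0_lt_compat, Hs.
  - apply Rmult_lt_0_compat; [apply Rinv_0_lt_compat, Hs | apply exp_pos].
Qed.

(* Substituting [t = s y] turns every expectation under [nc_dens s u] into an integral against
   [exp (- y) J (4 g y)] with [g = u / s]. *)
Lemma nc_dens_rescale s u t : 0 < s ->
  nc_dens s u t = exp (- (u / s)) / s * (exp (- (/ s * t)) * J (4 * (u / s) * (/ s * t))).
Proof.
  intros Hs. unfold nc_dens.
  replace (4 * (u / s) * (/ s * t)) with (4 * t / s ^ 2 * u) by (field; lra).
  replace (exp (- (t + u) / s)) with (exp (- (u / s)) * exp (- (/ s * t)))
    by (rewrite <- exp_plus; f_equal; field; lra).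
  field. lra.
Qed.

Lemma is_int0inf_nc_dens s u : 0 < s -> 0 <= u -> is_int0inf (nc_dens s u) 1.
Proof.
  intros Hs Hu.
  assert (Hg : 0 <= u / s) by (apply Rdiv_le_0_compat; lra).
  assert (H := is_int0inf_comp_scal _ _ (/ s) (Rinv_0_lt_compat _ Hs)
                 (is_int0inf_scal (exp (- (u / s)) / s) _ _ (is_int0inf_exp_J _ Hg))).
  replace 1 with (exp (- (u / s)) / s * exp (u / s) / / s)
    by (generalize (exp_pos (u / s)); rewrite exp_Ropp; intros; field; split; lra).
  eapply is_int0inf_ext; [| exact H].
  intros t _. rewrite nc_dens_rescale by lra. simpl. ring.
Qed.

Lemma is_derive_ln_nc_dens s t (u u1 : R -> R) ph :
  0 < s -> 0 <= t -> (forall p, 0 <= u p) -> is_derive u ph (u1 ph) ->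
  is_derive (fun p => ln (nc_dens s (u p) t)) ph (nc_score s (u ph) (u1 ph) t).
Proof.
  intros Hs Ht Hu Hd.
  apply (is_derive_ext (fun p => - ln s + - (t + u p) / s + ln (J (4 * t / s ^ 2 * u p)))).
  { intros p. symmetry. apply ln_nc_dens; auto. }
  assert (HJ := J_pos _ (nc_arg_nonneg s (u ph) t Hs (Hu ph) Ht)).
  unfold nc_score. auto_derive; change (s * (s * 1)) with (s ^ 2).
  - repeat split; try (exists (u1 ph); exact Hd); [| exact HJ].
    exists (J1 (4 * t / s ^ 2 * u ph)). apply J_derive.
  - change (Derive (fun x => u x) ph) with (Derive u ph).
    change (Derive (fun x => J x)) with (Derive J).
    rewrite (is_derive_unique _ _ _ Hd), (is_derive_unique _ _ _ (J_derive _)). field. lra.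
Qed.

Lemma is_derive_nc_score s t (u u1 u2 : R -> R) ph :
  0 < s -> 0 <= t -> (forall p, 0 <= u p) -> (forall p, is_derive u p (u1 p)) ->
  is_derive u1 ph (u2 ph) ->
  is_derive (fun p => nc_score s (u p) (u1 p) t) ph (nc_score2 s (u ph) (u1 ph) (u2 ph) t).
Proof.
  intros Hs Ht Hu Hd1 Hd2.
  assert (HJ := J_pos _ (nc_arg_nonneg s (u ph) t Hs (Hu ph) Ht)).
  unfold nc_score, nc_score2. auto_derive; change (s * (s * 1)) with (s ^ 2).
  - repeat split; try (exists (u2 ph); exact Hd2); try (exists (u1 ph); apply Hd1); try lra.
    + exists (J2 (4 * t / s ^ 2 * u ph)). apply J1_derive.
    + exists (J1 (4 * t / s ^ 2 * u ph)). apply J_derive.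
  - change (Derive (fun x => u x) ph) with (Derive u ph).
    change (Derive (fun x => u1 x) ph) with (Derive u1 ph).
    change (Derive (fun x => J x)) with (Derive J).
    change (Derive (fun x => J1 x)) with (Derive J1).
    rewrite (is_derive_unique _ _ _ (Hd1 ph)), (is_derive_unique _ _ _ Hd2),
      (is_derive_unique _ _ _ (J_derive _)), (is_derive_unique _ _ _ (J1_derive _)).
    field. lra.
Qed.

(* The [u2] terms cancel: the score has mean zero. *)
Lemma is_int0inf_nc_score2 s u u1 u2 : 0 < s -> 0 <= u ->
  is_int0inf (fun t => nc_score2 s u u1 u2 t * nc_dens s u t) (nc_mean_score2 s u u1).
Proof.
  intros Hs Hu. set (g := u / s).
  assert (Hg : 0 <= g) by (apply Rdiv_le_0_compat; lra).
  set (M := int0inf (ratio_integrand g)).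
  assert (H : is_int0inf (fun y => exp (- g) / s *
      (- (u2 / s) * (y ^ 0 * exp (- y) * J (4 * g * y))
       + 4 * u2 / s * (y ^ 1 * exp (- y) * J1 (4 * g * y))
       + 16 * u1 ^ 2 / s ^ 2 * (y ^ 2 * exp (- y) * J2 (4 * g * y) + -1 * ratio_integrand g y)))
    (exp (- g) / s * (- (u2 / s) * exp g + 4 * u2 / s * (exp g / 4)
                      + 16 * u1 ^ 2 / s ^ 2 * (exp g / 16 + -1 * M)))).
  { apply is_int0inf_scal.
    apply is_int0inf_plus; [apply is_int0inf_plus |]; apply is_int0inf_scal.
    - apply is_int0inf_exp_J, Hg.
    - apply is_int0inf_pow1_exp_J1, Hg.
    - apply is_int0inf_plus; [apply is_int0inf_pow2_exp_J2, Hg |].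
      apply is_int0inf_scal, is_int0inf_ratio_integrand, Hg. }
  apply (is_int0inf_comp_scal _ _ (/ s) (Rinv_0_lt_compat _ Hs)) in H.
  replace (nc_mean_score2 s u u1) with
    (exp (- g) / s * (- (u2 / s) * exp g + 4 * u2 / s * (exp g / 4)
                      + 16 * u1 ^ 2 / s ^ 2 * (exp g / 16 + -1 * M)) / / s).
  2: { unfold nc_mean_score2. fold g M. generalize (exp_pos g). rewrite exp_Ropp.
       intros. field. split; lra. }
  eapply is_int0inf_ext; [| exact H]. intros t Ht.
  assert (HJ := J_pos _ (nc_arg_nonneg s u t Hs Hu ltac:(lra))).
  rewrite nc_dens_rescale by lra. fold g. unfold nc_score2, ratio_integrand.
  replace (4 * g * (/ s * t)) with (4 * t / s ^ 2 * u) by (unfold g; field; lra).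
  field. split; lra.
Qed.

Lemma gfun_eq g : 0 < g -> gfun g = (g + 1) / g - 16 * exp (- g) * int0inf (ratio_integrand g).
Proof.
  intros Hg. set (M := int0inf (ratio_integrand g)).
  assert (H : is_int0inf (fun y => exp (- g) * (y ^ 1 * exp (- y) * J (4 * g * y)
                                                + - 16 * g * ratio_integrand g y))
                (exp (- g) * ((g + 1) * exp g + - 16 * g * M))).
  { apply is_int0inf_scal, is_int0inf_plus; [apply is_int0inf_pow1_exp_J; lra |].
    apply is_int0inf_scal, is_int0inf_ratio_integrand; lra. }
  apply (is_int0inf_comp_scal _ _ g Hg) in H.
  unfold gfun. apply is_int0inf_unique.
  replace ((g + 1) / g - 16 * exp (- g) * M)
    with (exp (- g) * ((g + 1) * exp g + - 16 * g * M) / g)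
    by (generalize (exp_pos g); rewrite exp_Ropp; intros; field; split; lra).
  eapply is_int0inf_ext; [| exact H]. intros t Ht.
  unfold besselR, ratio_integrand. rewrite besselI0_eq, besselI1_eq.
  assert (E : (2 * g * sqrt t) ^ 2 = 4 * g * (g * t)).
  { replace ((2 * g * sqrt t) ^ 2) with (4 * g * g * (sqrt t * sqrt t)) by ring.
    rewrite sqrt_sqrt by lra. ring. }
  rewrite E.
  assert (Hq : 0 <= 4 * g * (g * t)) by (apply Rmult_le_pos; [lra | apply Rmult_le_pos; lra]).
  assert (HJ := J_pos _ Hq).
  replace (exp (- g * (1 + t))) with (exp (- g) * exp (- (g * t)))
    by (rewrite <- exp_plus; f_equal; ring).
  replace ((2 * (2 * g * sqrt t) * J1 (4 * g * (g * t)) / J (4 * g * (g * t))) ^ 2)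
    with (4 * (2 * g * sqrt t) ^ 2 * J1 (4 * g * (g * t)) ^ 2 / J (4 * g * (g * t)) ^ 2)
    by (field; lra).
  rewrite E. simpl pow. field. lra.
Qed.

Lemma nc_mean_score2_eq s u u1 : 0 < s -> 0 < u ->
  - nc_mean_score2 s u u1 = (u1 / s) ^ 2 * (/ (u / s) - gfun (u / s)).
Proof.
  intros Hs Hu. assert (Hg : 0 < u / s) by (apply Rdiv_lt_0_compat; lra).
  unfold nc_mean_score2. rewrite (gfun_eq _ Hg). field. lra.
Qed.

(** * The L independent observations *)

Lemma upd_eq x n t : upd x n t n = t.
Proof. unfold upd. rewrite Nat.eqb_refl. reflexivity. Qed.

Lemma upd_neq x n t k : k <> n -> upd x n t k = x k.
Proof. intros H. unfold upd. apply Nat.eqb_neq in H. rewrite H. reflexivity. Qed.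

Lemma iter_int_ext n F G : (forall x, (forall k, (k < n)%nat -> 0 < x k) -> F x = G x) ->
  iter_int n F = iter_int n G.
Proof.
  revert F G. induction n as [|n IH]; intros F G H; simpl.
  - apply H. intros; lia.
  - apply int0inf_ext. intros t Ht. apply IH.
    intros x Hx. apply H. intros k Hk. destruct (Nat.eq_dec k n) as [-> | Hne].
    + rewrite upd_eq. exact Ht.
    + rewrite upd_neq by exact Hne. apply Hx. lia.
Qed.

Lemma iter_int_sumR_prodR n M (c : nat -> R) (q : nat -> nat -> R -> R) (Q : nat -> nat -> R) :
  (forall l k, is_int0inf (q l k) (Q l k)) ->
  iter_int n (fun x => sumR M (fun l => c l * prodR n (fun k => q l k (x k)))) =
  sumR M (fun l => c l * prodR n (Q l)).
Proof.
  intros HQ. revert c. induction n as [|n IH]; intros c; [reflexivity |]. simpl.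
  transitivity (int0inf (fun t => sumR M (fun l => c l * q l n t * prodR n (Q l)))).
  - f_equal. apply functional_extensionality. intros t.
    rewrite <- (IH (fun l => c l * q l n t)). f_equal.
    apply functional_extensionality. intros x. apply sumR_ext. intros l _.
    rewrite upd_eq, (prodR_ext n (fun k => q l k (upd x n t k)) (fun k => q l k (x k))); [ring |].
    intros k Hk. rewrite upd_neq by lia. reflexivity.
  - apply is_int0inf_unique.
    apply is_int0inf_sumR. intros l. simpl prodR.
    replace (c l * (prodR n (Q l) * Q l n)) with (c l * prodR n (Q l) * Q l n) by ring.
    apply is_int0inf_ext with (fun t => c l * prodR n (Q l) * q l n t); [intros; ring |].
    apply (is_int0inf_scal (c l * prodR n (Q l))), HQ.
Qed.

Lemma iter_int_sumR_mul_prodR n (p h : nat -> R -> R) (V : nat -> R) :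
  (forall k, is_int0inf (p k) 1) -> (forall l, is_int0inf (fun t => h l t * p l t) (V l)) ->
  iter_int n (fun x => sumR n (fun l => h l (x l)) * prodR n (fun k => p k (x k))) = sumR n V.
Proof.
  intros Hp Hh.
  set (q := fun l k t => if Nat.eqb k l then h l t * p l t else p k t).
  set (Q := fun l k => if Nat.eqb k l then V l else 1).
  transitivity (iter_int n (fun x => sumR n (fun l => 1 * prodR n (fun k => q l k (x k))))).
  - f_equal. apply functional_extensionality. intros x.
    rewrite sumR_mult_r. apply sumR_ext. intros l Hl.
    rewrite (prodR_update n l (fun k => q l k (x k)) (fun k => p k (x k)) (h l (x l)));
      [ring | exact Hl | |].
    + intros k _ Hne. unfold q. apply Nat.eqb_neq in Hne. rewrite Hne. reflexivity.
    + unfold q. rewrite Nat.eqb_refl. reflexivity.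
  - rewrite (iter_int_sumR_prodR n n (fun _ => 1) q Q).
    + apply sumR_ext. intros l Hl.
      rewrite (prodR_update n l (Q l) (fun _ => 1) (V l)), prodR_one; [ring | exact Hl | |].
      * intros k _ Hne. unfold Q. apply Nat.eqb_neq in Hne. rewrite Hne. reflexivity.
      * unfold Q. rewrite Nat.eqb_refl. ring.
    + intros l k. unfold q, Q. destruct (Nat.eqb k l) eqn:E.
      * apply Nat.eqb_eq in E. subst k. apply Hh.
      * apply Hp.
Qed.

Definition dlam (L : nat) (A alpha beta phi : R) (l : nat) : R :=
  - (2 * A * alpha * beta * sin (psi L l + phi)).
Definition d2lam (L : nat) (A alpha beta phi : R) (l : nat) : R :=
  - (2 * A * alpha * beta * cos (psi L l + phi)).

Lemma is_derive_lam L A alpha beta l phi :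
  is_derive (fun p => lam L A alpha beta p l) phi (dlam L A alpha beta phi l).
Proof. unfold lam, dlam. auto_derive; [exact I | ring]. Qed.

Lemma is_derive_dlam L A alpha beta l phi :
  is_derive (fun p => dlam L A alpha beta p l) phi (d2lam L A alpha beta phi l).
Proof. unfold dlam, d2lam. auto_derive; [exact I | ring]. Qed.

Lemma lam_nonneg L A alpha beta phi l : 0 <= A -> 0 <= lam L A alpha beta phi l.
Proof.
  intros HA. unfold lam. apply Rmult_le_pos; [exact HA |].
  set (c := cos (psi L l + phi)). assert (Hc := COS_bound (psi L l + phi)). fold c in Hc.
  assert (0 <= beta ^ 2 * (1 - c ^ 2)) by (apply Rmult_le_pos; nra).
  assert (0 <= (alpha + beta * c) ^ 2) by apply pow2_ge_0.
  nra.
Qed.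

Lemma dens_eq L A alpha beta s2 phi l t : 0 < A -> 0 < s2 -> 0 <= t ->
  dens L A alpha beta s2 phi l t = nc_dens (A * s2) (lam L A alpha beta phi l) t.
Proof.
  intros HA Hs Ht. unfold dens, nc_dens. rewrite besselI0_eq.
  assert (Hu := lam_nonneg L A alpha beta phi l ltac:(lra)).
  assert (0 < A * s2) by (apply Rmult_lt_0_compat; lra).
  replace ((sqrt (lam L A alpha beta phi l * t) / (A * s2 / 2)) ^ 2)
    with (sqrt (lam L A alpha beta phi l * t) * sqrt (lam L A alpha beta phi l * t) * 4 / (A * s2) ^ 2)
    by (field; lra).
  rewrite sqrt_sqrt by (apply Rmult_le_pos; lra).
  f_equal; [f_equal; field; lra | f_equal; field; lra].
Qed.

Lemma Derive2_ln_joint_dens L A alpha beta s2 phi x : 0 < A -> 0 < s2 ->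
  (forall k, (k < L)%nat -> 0 < x k) ->
  Derive (fun ph => Derive (fun ph' => ln (joint_dens L A alpha beta s2 ph' x)) ph) phi =
  sumR L (fun l => nc_score2 (A * s2) (lam L A alpha beta phi l) (dlam L A alpha beta phi l)
                     (d2lam L A alpha beta phi l) (x l)).
Proof.
  intros HA Hs Hx.
  assert (Hs' : 0 < A * s2) by (apply Rmult_lt_0_compat; lra).
  assert (Hu : forall l p, 0 <= lam L A alpha beta p l) by (intros; apply lam_nonneg; lra).
  assert (Hln : forall ph, ln (joint_dens L A alpha beta s2 ph x) =
      sumR L (fun l => ln (nc_dens (A * s2) (lam L A alpha beta ph l) (x l)))).
  { intros ph. unfold joint_dens.
    rewrite (prodR_ext L _ (fun k => nc_dens (A * s2) (lam L A alpha beta ph k) (x k)))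
      by (intros k Hk; apply dens_eq; auto; apply Rlt_le, Hx, Hk).
    apply ln_prodR. intros k Hk. apply nc_dens_pos; auto. apply Rlt_le, Hx, Hk. }
  assert (Hd1 : forall ph, Derive (fun ph' => ln (joint_dens L A alpha beta s2 ph' x)) ph =
      sumR L (fun l => nc_score (A * s2) (lam L A alpha beta ph l) (dlam L A alpha beta ph l) (x l))).
  { intros ph. rewrite (Derive_ext _ _ ph Hln). apply is_derive_unique.
    apply (is_derive_sumR L (fun l p => ln (nc_dens (A * s2) (lam L A alpha beta p l) (x l)))).
    intros l Hl.
    apply (is_derive_ln_nc_dens _ _ (fun p => lam L A alpha beta p l)
             (fun p => dlam L A alpha beta p l));
      [exact Hs' | apply Rlt_le, Hx, Hl | intros; apply Hu | apply is_derive_lam]. }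
  rewrite (Derive_ext (fun ph => Derive (fun ph' => ln (joint_dens L A alpha beta s2 ph' x)) ph)
            _ phi Hd1).
  apply is_derive_unique.
  apply (is_derive_sumR L (fun l p => nc_score (A * s2) (lam L A alpha beta p l)
                                        (dlam L A alpha beta p l) (x l))).
  intros l Hl.
  apply (is_derive_nc_score _ _ (fun p => lam L A alpha beta p l) (fun p => dlam L A alpha beta p l)
           (fun p => d2lam L A alpha beta p l));
    [exact Hs' | apply Rlt_le, Hx, Hl | intros; apply Hu | intros; apply is_derive_lam |
     apply is_derive_dlam].
Qed.

(* [2 sin d cos x = sin (x + d) - sin (x - d)] with [d = PI / L] telescopes over the full turn. *)
Lemma sumR_cos_psi L phi : (2 <= L)%nat -> sumR L (fun l => cos (psi L l + phi)) = 0.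
Proof.
  intros HL.
  assert (HL' : 2 <= INR L) by (replace 2 with (INR 2) by (simpl; ring); apply le_INR, HL).
  set (d := PI / INR L).
  assert (Hd : 0 < d < PI).
  { unfold d. split; [apply Rdiv_lt_0_compat; [apply PI_RGT_0 | lra] |].
    apply Rmult_lt_reg_r with (INR L); [lra |]. unfold Rdiv. rewrite Rmult_assoc, Rinv_l by lra.
    generalize PI_RGT_0; nra. }
  assert (Hsin := sin_gt_0 d (proj1 Hd) (proj2 Hd)).
  set (f := fun l => sin (psi L l + phi - d)).
  assert (E : forall l, 2 * sin d * cos (psi L l + phi) = f (S l) - f l).
  { intros l. unfold f.
    replace (psi L (S l) + phi - d) with (psi L l + phi + d) by (unfold psi, d; rewrite S_INR; field; lra).
    rewrite sin_plus, sin_minus. ring. }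
  assert (T : 2 * sin d * sumR L (fun l => cos (psi L l + phi)) = 0).
  { rewrite <- sumR_mult_l, (sumR_ext L _ (fun l => f (S l) - f l)) by (intros; apply E).
    rewrite sumR_telescope. unfold f.
    replace (psi L L + phi - d) with (psi L 0 + phi - d + 2 * PI) by (unfold psi; simpl INR; field; lra).
    rewrite sin_plus, sin_2PI, cos_2PI. ring. }
  apply Rmult_integral in T. destruct T as [T | T]; [lra | exact T].
Qed.

Lemma gam_bar_eq L alpha beta s2 phi : (2 <= L)%nat -> 0 < s2 ->
  gam_bar L alpha beta s2 phi = (alpha ^ 2 + beta ^ 2) / s2.
Proof.
  intros HL Hs. unfold gam_bar.
  assert (HL' : 2 <= INR L) by (replace 2 with (INR 2) by (simpl; ring); apply le_INR, HL).
  rewrite (sumR_ext L _ (fun l => (alpha ^ 2 + beta ^ 2) / s2 + 2 * alpha * beta / s2 * cos (psi L l + phi)))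
    by (intros; unfold gam; field; lra).
  rewrite sumR_affine, sumR_cos_psi by exact HL. field. lra.
Qed.

Lemma lam_eq_0_sin L A alpha beta phi l : 0 < A -> lam L A alpha beta phi l = 0 ->
  alpha * beta * sin (psi L l + phi) = 0.
Proof.
  intros HA Hzero.
  set (c := cos (psi L l + phi)). set (sn := sin (psi L l + phi)).
  assert (Hpy : sn ^ 2 + c ^ 2 = 1) by (unfold sn, c; rewrite <- !Rsqr_pow2; apply sin2_cos2).
  assert (H0 : alpha ^ 2 + beta ^ 2 + 2 * alpha * beta * c = 0).
  { unfold lam in Hzero. fold c in Hzero. apply (Rmult_eq_reg_l A); lra. }
  assert (Hb : beta * sn = 0).
  { apply Rsqr_0_uniq. unfold Rsqr.
    assert (0 <= (alpha + beta * c) ^ 2) by apply pow2_ge_0. nra. }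
  rewrite Rmult_assoc, Hb. ring.
Qed.

(* If [lam] vanishes then [gam = 0] and [/ gam] is the junk value [/ 0]; the identity survives
   because both sides vanish by [lam_eq_0_sin]. *)
Lemma fisher_term_eq L A alpha beta s2 phi l : 0 < A -> 0 < s2 ->
  - nc_mean_score2 (A * s2) (lam L A alpha beta phi l) (dlam L A alpha beta phi l) =
  (2 * alpha * beta / s2) ^ 2 *
  (sin (psi L l + phi) ^ 2 * (/ gam L alpha beta s2 phi l - gfun (gam L alpha beta s2 phi l))).
Proof.
  intros HA Hs.
  assert (Hs' : 0 < A * s2) by (apply Rmult_lt_0_compat; lra).
  destruct (Rle_lt_or_eq_dec _ _ (lam_nonneg L A alpha beta phi l ltac:(lra))) as [Hpos | Hzero].
  - replace (gam L alpha beta s2 phi l) with (lam L A alpha beta phi l / (A * s2))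
      by (unfold gam, lam; field; lra).
    rewrite nc_mean_score2_eq by assumption. unfold dlam. field. lra.
  - assert (Hsin := lam_eq_0_sin L A alpha beta phi l HA (eq_sym Hzero)).
    unfold nc_mean_score2, dlam.
    set (Y := / gam L alpha beta s2 phi l - gfun (gam L alpha beta s2 phi l)).
    set (M := 1 - 16 * exp (- (lam L A alpha beta phi l / (A * s2)))
                * int0inf (ratio_integrand (lam L A alpha beta phi l / (A * s2)))).
    transitivity (- (2 * A * (alpha * beta * sin (psi L l + phi)) / (A * s2)) ^ 2 * M);
      [unfold Rdiv; ring |].
    transitivity ((2 * (alpha * beta * sin (psi L l + phi)) / s2) ^ 2 * Y); [| unfold Rdiv; ring].
    rewrite Hsin. unfold Rdiv. ring.
Qed.

Lemma fisher_info_eq L A alpha beta s2 phi : 0 < A -> 0 < s2 ->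
  fisher_info L A alpha beta s2 phi =
  - sumR L (fun l => nc_mean_score2 (A * s2) (lam L A alpha beta phi l) (dlam L A alpha beta phi l)).
Proof.
  intros HA Hs.
  assert (Hs' : 0 < A * s2) by (apply Rmult_lt_0_compat; lra).
  assert (Hlam : forall l, 0 <= lam L A alpha beta phi l) by (intros; apply lam_nonneg; lra).
  unfold fisher_info. f_equal.
  rewrite (iter_int_ext L _ (fun x =>
    sumR L (fun l => nc_score2 (A * s2) (lam L A alpha beta phi l) (dlam L A alpha beta phi l)
                       (d2lam L A alpha beta phi l) (x l)) *
    prodR L (fun k => nc_dens (A * s2) (lam L A alpha beta phi k) (x k)))).
  - apply (iter_int_sumR_mul_prodR L (fun k => nc_dens (A * s2) (lam L A alpha beta phi k))
             (fun l => nc_score2 (A * s2) (lam L A alpha beta phi l) (dlam L A alpha beta phi l)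
                         (d2lam L A alpha beta phi l)));
      intros; [apply is_int0inf_nc_dens | apply is_int0inf_nc_score2]; (exact Hs' || apply Hlam).
  - intros x Hx. rewrite Derive2_ln_joint_dens by assumption. f_equal.
    apply prodR_ext. intros k Hk. apply dens_eq; [lra | lra | apply Rlt_le, Hx, Hk].
Qed.

Theorem theorem1 (L : nat) (A alpha beta s2 phi : R) :
  (2 <= L)%nat -> 0 < A -> 0 < alpha -> 0 < beta -> 0 < s2 ->
  0 <= phi < 2 * PI ->
  / CRLB L A alpha beta s2 phi =
    (Kc alpha beta) ^ 2 * (gam_bar L alpha beta s2 phi) ^ 2 *
    sumR L (fun l => (sin (psi L l + phi)) ^ 2 *
                     (/ gam L alpha beta s2 phi l - gfun (gam L alpha beta s2 phi l))).
Proof.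
  intros HL HA Ha Hb Hs _.
  unfold CRLB. rewrite Rinv_inv, fisher_info_eq by assumption.
  rewrite <- sumR_opp, (sumR_ext L _ _ (fun l _ => fisher_term_eq L A alpha beta s2 phi l HA Hs)).
  rewrite sumR_mult_l, gam_bar_eq by assumption. unfold Kc.
  assert (0 < alpha ^ 2 + beta ^ 2) by nra.
  field. split; lra.
Qed.
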